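(* For every tight Rabin GFG automaton, there exists an equivalent strongly tight Rabin GFG automaton over the same structure.
   Context: An automaton is $\mathcal{A}=\langle\Sigma,Q,Q_0,\delta,\alpha\rangle$ with structure $\langle\Sigma,Q,Q_0,\delta\rangle$ ($\delta:Q\times\Sigma\to2^Q$). In a Rabin automaton $\alpha$ is a set of pairs $\langle E,F\rangle$ of sets of states ($E$ the bad set, $F$ the good set); a set $S$ of states is accepting if for some pair $S\cap E=\emptyset$ and $S\cap F\neq\emptyset$; a run is accepting if its set of infinitely visited states is accepting. $\mathcal{A}$ is GFG if there is a strategy $g:\Sigma^*\to Q$ such that for every $w=a_1a_2\cdots$, $g(\epsilon),g(a_1),g(a_1a_2),\ldots$ is a run on $w$, accepting whenever $w\in L(\mathcal{A})$. Finite-state strategies are transducers $g=\langle\Sigma,Q,M,m_0,\rho,\tau\rangle$ (finite memories $M$, $\rho:M\times\Sigma\to M$ extended to words from $m_0$, $\tau:M\to Q$, $g(u)=\tau(\rho(u))$); $m$ is a memory of $q$ if $\tau(m)=q$. $\mathcal{A}_g=\langle\Sigma,M,m_0,\rho,\alpha_g\rangle$ where $\alpha_g$ replaces each set $F$ in $\alpha$ by $\{m\mid\tau(m)\in F\}$. A transition $\langle q,a,q'\rangle$ is used by $g$ if $q=g(u)$, $q'=g(ua)$ for some $u$. Paths are finite sequences of states joined by transitions, cycles are paths whose first and last elements coincide; for a set $P$ of paths, a combination is the union of the state sets of a nonempty subset of $P$. For memories $m\neq m'$ with $\tau(m)=\tau(m')$, $m$ is replaceable by $m'$ if the set of paths of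 $\mathcal{A}_g$ from $m'$ to $m$ is empty or all its combinations are accepting. $\mathcal{A}$ is tight w.r.t. a finite-state strategy $g$ witnessing GFGness if all transitions are used by $g$ and no memory is replaceable by a different memory of the same state; tight if tight w.r.t. some such $g$. For a state $q$, a path of $\mathcal{A}_g$ is $q$-exclusive accepting if its set of memories is accepting but that set minus the memories of $q$ is not accepting. A Rabin GFG automaton is strongly tight w.r.t. $g$ if it is tight w.r.t. $g$ and for every state $q$ appearing in some good set of $\alpha$ there is a $q$-exclusive accepting cycle in $\mathcal{A}_g$; strongly tight if so w.r.t. some $g$. Equivalent means same language; over the same structure means only the acceptance condition differs. *)

From mathcomp Require Import all_boot.
Unset Printing Implicit Defensive.

(* A Rabin condition is a
   list of pairs (E, F) (E bad, F good). *)

Section Rabin.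
Variable T : finType.

Definition rabin_accepting (alpha : seq ({set T} * {set T})) (S : T -> Prop) : Prop :=
  exists2 EF, EF \in alpha &
    (forall x, S x -> x \notin EF.1) /\ (exists x, S x /\ x \in EF.2).

Definition inf_set (r : nat -> T) : T -> Prop :=
  fun q => forall n, exists m, n <= m /\ r m = q.
End Rabin.
Arguments rabin_accepting {T}.
Arguments inf_set {T}.

Section Automaton.
Variables (Sigma Q : finType) (Q0 : {set Q}) (delta : Q -> Sigma -> {set Q}).

Definition is_run (w : nat -> Sigma) (r : nat -> Q) : Prop :=
  r 0 \in Q0 /\ forall n, r n.+1 \in delta (r n) (w n).

Definition accepting_run (alpha : seq ({set Q} * {set Q})) (r : nat -> Q) : Prop :=
  rabin_accepting alpha (inf_set r).

Definition accepts (alpha : seq ({set Q} * {set Q})) (w : nat -> Sigma) : Prop :=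
  exists r, is_run w r /\ accepting_run alpha r.

Definition prefix (w : nat -> Sigma) (n : nat) : seq Sigma := mkseq w n.

Definition gfg_strategy (alpha : seq ({set Q} * {set Q})) (g : seq Sigma -> Q) : Prop :=
  forall w, is_run w (fun n => g (prefix w n)) /\
    (accepts alpha w -> accepting_run alpha (fun n => g (prefix w n))).

Record transducer := Transducer {
  mem : finType;
  m0 : mem;
  rho : mem -> Sigma -> mem;
  tau : mem -> Q }.
Arguments m0 : clear implicits.
Arguments rho : clear implicits.
Arguments tau : clear implicits.

Definition strat (g : transducer) (u : seq Sigma) : Q :=
  tau g (foldl (rho g) (m0 g) u).

Definition used (g : transducer) (q : Q) (a : Sigma) (q' : Q) : Prop :=
  exists u, q = strat g u /\ q' = strat g (rcons u a).

Definition alpha_g (g : transducer) (alpha : seq ({set Q} * {set Q}))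
  : seq ({set mem g} * {set mem g}) :=
  map (fun EF : {set Q} * {set Q} =>
    ([set m | tau g m \in EF.1], [set m | tau g m \in EF.2])) alpha.

Definition medge (g : transducer) : rel (mem g) :=
  fun m m' => [exists a, rho g m a == m'].

Definition gpath (g : transducer) (p : seq (mem g)) : Prop :=
  if p is x :: s then path (medge g) x s else False.

Definition path_from_to (g : transducer) (m' m : mem g) (p : seq (mem g)) : Prop :=
  gpath g p /\ head m p = m' /\ last m' p = m.

Definition gcycle (g : transducer) (p : seq (mem g)) : Prop :=
  match p with
  | x :: s => path (medge g) x s /\ s <> [::] /\ last x s = x
  | [::] => False
  end.

Definition union_paths (g : transducer) (X : seq (mem g) -> Prop) : mem g -> Prop :=
  fun m => exists p, X p /\ m \in p.

Definition replaceable (alpha : seq ({set Q} * {set Q})) (g : transducer) (m m' : mem g) : Prop :=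
  m <> m' /\ tau g m = tau g m' /\
  ((forall p, ~ path_from_to g m' m p) \/
   (forall X : seq (mem g) -> Prop,
      (forall p, X p -> path_from_to g m' m p) -> (exists p, X p) ->
      rabin_accepting (alpha_g g alpha) (union_paths g X))).

Definition tight_wrt (alpha : seq ({set Q} * {set Q})) (g : transducer) : Prop :=
  gfg_strategy alpha (strat g) /\
  (forall q a q', q' \in delta q a -> used g q a q') /\
  (forall m m' : mem g, tau g m = tau g m' -> m <> m' -> ~ replaceable alpha g m m').

Definition tight (alpha : seq ({set Q} * {set Q})) : Prop :=
  exists g : transducer, tight_wrt alpha g.

Definition exclusive_accepting (alpha : seq ({set Q} * {set Q})) (g : transducer)
  (q : Q) (p : seq (mem g)) : Prop :=
  rabin_accepting (alpha_g g alpha) (fun m => m \in p) /\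
  ~ rabin_accepting (alpha_g g alpha) (fun m => m \in p /\ tau g m <> q).

Definition strongly_tight_wrt (alpha : seq ({set Q} * {set Q})) (g : transducer) : Prop :=
  tight_wrt alpha g /\
  (forall q, (exists2 EF, EF \in alpha & q \in EF.2) ->
     exists p, gcycle g p /\ exclusive_accepting alpha g q p).

Definition strongly_tight (alpha : seq ({set Q} * {set Q})) : Prop :=
  exists g : transducer, strongly_tight_wrt alpha g.
End Automaton.
Arguments accepts {Sigma Q}.
Arguments tight {Sigma Q}.
Arguments strongly_tight {Sigma Q}.

From Pilot Require Import Defs.
From mathcomp Require Import all_boot zify.
From Stdlib Require Import Classical.

(* Starting from a witness g of tightness, repeatedly pick a good state q that has
   no q-exclusive accepting cycle in A_g, and remove q from all good sets while
   adding compensating pairs.  Each such step makes fewer sets of states accepting,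
   yet keeps every accepting cycle of A_g accepting: the cycle is not q-exclusive,
   so it stays accepting once the memories of q are removed.  The number of good
   states drops, so the process ends with a condition in which every good state has
   an exclusive accepting cycle.  Since the memories visited infinitely often by a
   run of g form a cycle of A_g, g remains a GFG witness and the language does not
   change; and with fewer accepting sets, replaceability only gets harder, so g is
   still tight. *)

Section RabinConditions.
Context {T : finType}.
Local Notation rabin_pair := ({set T} * {set T})%type.
Implicit Types (a : seq rabin_pair) (S : T -> Prop).

Lemma rabin_accepting_equiv a S S' :
  (forall x, S x <-> S' x) -> rabin_accepting a S -> rabin_accepting a S'.
Proof.
move=> SS' [EF EFa [SE [x [Sx xF]]]]; exists EF => //; split.
  by move=> y /SS'; apply: SE.
by exists x; split => //; apply/SS'.
Qed.

(* A new pair (E_i :|: (E_j :\ q), F_j :\ q) accepts a set S only if (E_i, F_i)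
   accepts S through q (when q is in S) or (E_j, F_j) accepts S (when it is not). *)
Definition shrink_good (q : T) a : seq rabin_pair :=
  [seq (EF.1, EF.2 :\ q) | EF <- a] ++
  [seq (EFi.1 :|: (EFj.1 :\ q), EFj.2 :\ q) |
     EFi : rabin_pair <- [seq EF : rabin_pair <- a | (q \notin EF.1) && (q \in EF.2)],
     EFj : rabin_pair <- [seq EF : rabin_pair <- a | q \in EF.1]].

Lemma rabin_accepting_shrink_good q a S :
  rabin_accepting (shrink_good q a) S -> rabin_accepting a S.
Proof.
case=> EF; rewrite mem_cat => /orP [/mapP [[E F] EFa ->] |
   /allpairsP [[[Ei Fi] [Ej Fj]] /= [EFi EFj ->]]] /= [SE [x [Sx]]].
  by rewrite in_setD1 => /andP [_ xF]; exists (E, F) => //; split => //; exists x.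
rewrite in_setD1 => /andP [_ xFj].
move: EFi EFj; rewrite !mem_filter /= => /andP [/andP [qEi qFi] EFi] /andP [qEj EFj].
have SEi y : S y -> y \notin Ei by move/SE; rewrite in_setU negb_or => /andP [].
case: (classic (S q)) => [Sq | nSq].
  by exists (Ei, Fi) => //; split => //; exists q.
exists (Ej, Fj) => //; split => /=; last by exists x.
move=> y Sy; move: (SE y Sy); rewrite in_setU in_setD1 negb_or => /andP [_].
by case: eqVneq Sy => [-> //|].
Qed.

Lemma shrink_good_accepting q a S :
  rabin_accepting a S -> rabin_accepting a (fun x => S x /\ x <> q) ->
  rabin_accepting (shrink_good q a) S.
Proof.
case=> [[Ei Fi]] EFi /= [SEi [y [Sy yFi]]].
case=> [[Ej Fj]] EFj /= [SEj [x [[Sx xq] xFj]]].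
have SEj' z : S z -> z \notin Ej :\ q.
  move=> Sz; rewrite in_setD1; case: (eqVneq z q) => //= /eqP zq.
  by apply: SEj.
have xFj' : x \in Fj :\ q by rewrite in_setD1 xFj andbT; apply/eqP.
have keep_pair EF : EF \in a -> (EF.1, EF.2 :\ q) \in shrink_good q a.
  by move=> EFa; rewrite mem_cat (map_f (fun EF => (EF.1, EF.2 :\ q)) EFa).
case qEj: (q \in Ej); last first.
  exists (Ej, Fj :\ q); first exact: (keep_pair (Ej, Fj)).
  split => /=; last by exists x.
  move=> z Sz; case: (eqVneq z q) => [->|/eqP zq]; first by rewrite qEj.
  exact: SEj.
case: (eqVneq y q) => [yq | yq]; last first.
  exists (Ei, Fi :\ q); first exact: (keep_pair (Ei, Fi)).
  by split => //=; exists y; rewrite in_setD1 yq yFi.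
subst y; exists (Ei :|: (Ej :\ q), Fj :\ q).
  rewrite mem_cat; apply/orP; right; apply/allpairsP.
  exists ((Ei, Fi), (Ej, Fj)); rewrite !mem_filter /= EFi EFj qEj yFi SEi //.
split => /=; last by exists x.
by move=> z Sz; rewrite in_setU negb_or SEi //= SEj'.
Qed.

Definition good_states a := [set q | has (fun EF : rabin_pair => q \in EF.2) a].

Lemma good_states_shrink_good q a :
  q \in good_states a -> good_states (shrink_good q a) \proper good_states a.
Proof.
move=> qa; apply/properP; split.
  apply/subsetP => z; rewrite !inE => /hasP [EF]; rewrite mem_cat =>
    /orP [/mapP [EF' EFa ->] | /allpairsP [[EFi EFj] [_ EFja ->]]] /=;
    rewrite in_setD1 => /andP [_ zF]; apply/hasP.
    by exists EF'.
  by exists EFj => //; move: EFja; rewrite mem_filter => /andP [].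
exists q => //; rewrite inE; apply/hasPn => EF; rewrite mem_cat =>
  /orP [/mapP [EF' _ ->] | /allpairsP [[EFi EFj] [_ _ ->]]];
  by rewrite /= in_setD1 eqxx.
Qed.

End RabinConditions.

Section PreimageConditions.
Context {T U : finType} (f : T -> U).

Definition pred_image (S : T -> Prop) : U -> Prop := fun u => exists2 x, S x & f x = u.

Definition preimage_condition (a : seq ({set U} * {set U})) : seq ({set T} * {set T}) :=
  map (fun EF : {set U} * {set U} => ([set x | f x \in EF.1], [set x | f x \in EF.2])) a.

Lemma rabin_accepting_preimage a S :
  rabin_accepting (preimage_condition a) S <-> rabin_accepting a (pred_image S).
Proof.
split.
  case=> _ /mapP [EF EFa ->] /= [SE [x [Sx]]]; rewrite inE => fxF.
  exists EF => //; split; last by exists (f x); split => //; exists x.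
  by move=> _ [y Sy <-]; move: (SE y Sy); rewrite inE.
case=> EF EFa [SE [_ [[x Sx <-] fxF]]].
exists ([set x | f x \in EF.1], [set x | f x \in EF.2]).
  exact: map_f.
split => /=; last by exists x; rewrite inE.
by move=> y Sy; rewrite inE; apply: SE; exists y.
Qed.

End PreimageConditions.

Section InfinitelyOften.
Context {T : finType} (r : nat -> T).

Lemma eventually_inf_set : exists N, forall n, N <= n -> inf_set r (r n).
Proof.
suff [N HN] : exists N, forall n, N <= n -> r n \in enum T -> inf_set r (r n).
  by exists N => n Nn; apply: HN; rewrite ?mem_enum.
elim: (enum T) => [|x s [N HN]]; first by exists 0.
have [N' HN'] : exists N', forall n, N' <= n -> r n = x -> inf_set r x.
  case: (classic (inf_set r x)) => [rx | /not_all_ex_not [N' nrx]]; first by exists 0.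
  by exists N' => n N'n rnx; case: nrx; exists n.
exists (maxn N N') => n; rewrite geq_max inE => /andP [Nn N'n] /orP [/eqP rnx | rns].
  by rewrite rnx; apply: (HN' n).
exact: HN.
Qed.

Lemma inf_set_window t0 :
  exists t1, forall q, inf_set r q -> exists2 t, t0 <= t <= t1 & r t = q.
Proof.
suff [t1 Ht1] : exists t1, forall q, q \in enum T -> inf_set r q ->
    exists2 t, t0 <= t <= t1 & r t = q.
  by exists t1 => q; apply: Ht1; rewrite mem_enum.
elim: (enum T) => [|x s [t1 Ht1]]; first by exists t0.
case: (classic (inf_set r x)) => [/(_ t0) [t [t0t rtx]] | nrx]; last first.
  by exists t1 => q; rewrite inE => /orP [/eqP -> //| /Ht1].
exists (maxn t t1) => q; rewrite inE => /orP [/eqP -> _ | /Ht1 Hq /Hq [t' t't1 rt']].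
  by exists t; rewrite ?t0t ?leq_maxl.
by exists t' => //; move: t't1; rewrite leq_max; lia.
Qed.

Lemma inf_set_cycle (e : rel T) : (forall n, e (r n) (r n.+1)) ->
  exists x s, [/\ path e x s, s <> [::], last x s = x &
    forall q, q \in x :: s <-> inf_set r q].
Proof.
(* From time N on only infinitely visited states occur; the cycle runs from N
   through a window visiting all of them and back to a later visit of r N. *)
move=> er; have [N HN] := eventually_inf_set.
have [t1 Ht1] := inf_set_window N.
have [t2 [t1t2 rt2]] := HN N (leqnn N) (maxn N t1).+1.
move: t1t2; rewrite gtn_max => /andP [Nt2 t1t2].
exists (r N), [seq r i | i <- iota N.+1 (t2 - N)]; split.
- have path_from n k : path e (r n) [seq r i | i <- iota n.+1 k].
    by elim: k n => [|k IHk] n //=; rewrite er IHk.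
  exact: path_from.
- have : 0 < t2 - N by lia.
  by case: (t2 - N).
- rewrite last_map -nth_last size_iota nth_iota; last lia.
  by rewrite -rt2; congr r; lia.
- move=> q; rewrite -map_cons -/(iota N (t2 - N).+1); split.
    by case/mapP => i; rewrite mem_iota => /andP [Ni _] ->; apply: HN.
  case/Ht1 => t /andP [Nt tt1] <-; apply: map_f; rewrite mem_iota; lia.
Qed.

Lemma inf_set_comp {U : finType} (f : T -> U) u :
  inf_set (f \o r) u <-> pred_image f (inf_set r) u.
Proof.
split.
  have [N HN] := eventually_inf_set.
  by move=> /(_ N) [n [Nn <-]]; exists (r n) => //; apply: HN.
move=> [x rx <-] n; have [m [nm rmx]] := rx n.
by exists m; rewrite /= rmx.
Qed.

End InfinitelyOften.
Arguments inf_set_cycle {T r e}.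

Section Refinement.
Context {Sigma Q : finType} {Q0 : {set Q}} {delta : Q -> Sigma -> {set Q}}.
Context {g : transducer Sigma Q}.
Implicit Types (a b : seq ({set Q} * {set Q})) (w : nat -> Sigma).
Local Notation alpha_g := (alpha_g Sigma Q g).
Local Notation tau := (tau Sigma Q g).
Local Notation strat_run w := (fun n => strat Sigma Q g (Defs.prefix Sigma w n)).

Lemma rabin_accepting_alpha_g a S :
  rabin_accepting (alpha_g a) S <-> rabin_accepting a (pred_image tau S).
Proof. exact: rabin_accepting_preimage. Qed.

Definition refines a b :=
  (forall S, rabin_accepting b S -> rabin_accepting a S) /\
  (forall p, gcycle Sigma Q g p -> rabin_accepting (alpha_g a) (fun m => m \in p) ->
     rabin_accepting (alpha_g b) (fun m => m \in p)).

Definition exclusive_cycles b :=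
  forall q, (exists2 EF, EF \in b & q \in EF.2) ->
    exists p, gcycle Sigma Q g p /\ exclusive_accepting Sigma Q b g q p.

Lemma refines_shrink_good a b q : refines a b ->
  ~ (exists p, gcycle Sigma Q g p /\ exclusive_accepting Sigma Q b g q p) ->
  refines a (shrink_good q b).
Proof.
move=> [ab_sets ab_cycles] no_excl; split.
  by move=> S /rabin_accepting_shrink_good; apply: ab_sets.
move=> p gp /(ab_cycles p gp) bp.
have bp_q : rabin_accepting (alpha_g b) (fun m => m \in p /\ tau m <> q).
  by apply: NNPP => nbp_q; apply: no_excl; exists p.
apply/rabin_accepting_alpha_g/shrink_good_accepting; first exact/rabin_accepting_alpha_g.
apply: rabin_accepting_equiv (proj1 (rabin_accepting_alpha_g _ _) bp_q) => x.
split; first by case=> m [mp mq] <-; split => //; exists m.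
by case=> [[m mp <-] mq]; exists m.
Qed.

Lemma exists_exclusive_refinement a : exists b, refines a b /\ exclusive_cycles b.
Proof.
suff: forall n b, #|good_states b| < n -> refines a b ->
    exists c, refines a c /\ exclusive_cycles c.
  by move/(_ #|good_states a|.+1 a); apply; [exact: ltnSn | by []].
elim=> [|n IHn] b bn ab; first by rewrite ltn0 in bn.
case: (classic (exclusive_cycles b)) => [excl_b | /not_all_ex_not [q]]; first by exists b.
move=> not_excl_q; have [[EF EFb qF] no_excl] := imply_to_and _ _ not_excl_q.
apply: (IHn (shrink_good q b)); last exact: refines_shrink_good.
have qb : q \in good_states b by rewrite inE; apply/hasP; exists EF.
have := proper_card (good_states_shrink_good q b qb); lia.
Qed.

(* strat g (prefix w n) is convertible to tau (memory_run w n). *)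
Definition memory_run w n := foldl (rho Sigma Q g) (m0 Sigma Q g) (Defs.prefix Sigma w n).

Lemma medge_memory_run w n : medge Sigma Q g (memory_run w n) (memory_run w n.+1).
Proof.
rewrite /memory_run /Defs.prefix /mkseq -addn1 iotaD map_cat cats1 foldl_rcons.
by apply/existsP; exists (w n).
Qed.

Lemma refines_strat_accepting {a b} : refines a b -> forall w,
  accepting_run Q a (strat_run w) -> accepting_run Q b (strat_run w).
Proof.
move=> [_ ab_cycles] w.
have [x [s [xs s0 sx inf_xs]]] := inf_set_cycle (medge_memory_run w).
have inf_strat q :
    inf_set (strat_run w) q <-> pred_image tau (fun m => m \in x :: s) q.
  apply: iff_trans (inf_set_comp (memory_run w) tau q) _.
  by split=> [] [m m_inf <-]; exists m => //; apply/inf_xs.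
move=> /(rabin_accepting_equiv _ _ _ inf_strat) /rabin_accepting_alpha_g.
move=> /(ab_cycles (x :: s) (conj xs (conj s0 sx))) /rabin_accepting_alpha_g.
by apply: rabin_accepting_equiv => q; apply: iff_sym.
Qed.

Lemma refines_accepts {a b} : refines a b ->
  gfg_strategy Sigma Q Q0 delta a (strat Sigma Q g) ->
  forall w, accepts Q0 delta b w <-> accepts Q0 delta a w.
Proof.
move=> ab gfg_a w; split.
  by case=> r [run_r acc_r]; exists r; split => //; apply: ab.1.
move=> acc_aw; have [run_g acc_g] := gfg_a w.
by eexists; split; last exact: refines_strat_accepting ab w (acc_g acc_aw).
Qed.

Lemma refines_gfg {a b} : refines a b ->
  gfg_strategy Sigma Q Q0 delta a (strat Sigma Q g) ->
  gfg_strategy Sigma Q Q0 delta b (strat Sigma Q g).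
Proof.
move=> ab gfg_a w; have [run_g acc_g] := gfg_a w.
split=> // /(refines_accepts ab gfg_a w) acc_aw.
exact: refines_strat_accepting ab w (acc_g acc_aw).
Qed.

Lemma replaceable_refines {a b m m'} :
  refines a b -> replaceable Sigma Q b g m m' -> replaceable Sigma Q a g m m'.
Proof.
move=> [ab_sets _] [mm' [tau_mm' [no_path | combos]]]; do !split => //; first by left.
right=> X X_paths X_nonempty.
by apply/rabin_accepting_alpha_g/ab_sets/rabin_accepting_alpha_g; apply: combos.
Qed.

Lemma tight_wrt_refines {a b} : refines a b ->
  tight_wrt Sigma Q Q0 delta a g -> tight_wrt Sigma Q Q0 delta b g.
Proof.
move=> ab [gfg_a [used_all no_repl]]; split; first exact: refines_gfg ab gfg_a.
split=> // m m' tau_mm' mm' /(replaceable_refines ab).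
exact: no_repl.
Qed.

End Refinement.

Theorem lemma5 (Sigma Q : finType) (Q0 : {set Q}) (delta : Q -> Sigma -> {set Q})
  (alpha : seq ({set Q} * {set Q})) :
  tight Q0 delta alpha ->
  exists alpha' : seq ({set Q} * {set Q}),
    (forall w, accepts Q0 delta alpha' w <-> accepts Q0 delta alpha w) /\
    strongly_tight Q0 delta alpha'.
Proof.
move=> [g tight_g].
have [alpha' [refines_alpha' excl_alpha']] := exists_exclusive_refinement (g := g) alpha.
exists alpha'; split.
  exact: refines_accepts refines_alpha' tight_g.1.
by exists g; split; first exact: tight_wrt_refines refines_alpha' tight_g.
Qed.
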